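(* Let $G=(V,E)$ be a finite simple strongly connected directed graph. Then the polynomial $\det(L)$ divides $\det(\mathcal L)$.
   Context: $x_e$ ($e\in E$), $y_v$ ($v\in V$) are indeterminates; $Q_{vw}=x_e$ for an edge $e$ from $v\neq w$ to $w$ (else $0$), $Q_{vv}=-\sum_{s(e)=v}x_e$; $L=Q+\mathrm{diag}(y_v)$. A spanning tree of $G$ is a subgraph on all vertices with no cycle, one vertex (root) of outdegree $0$ and all others of outdegree $1$. The tree graph $\mathcal TG$: vertices are spanning trees; for a tree $\mathbf a$ rooted at $r$ and $e$ with $s(e)=r$, adding $e$ and deleting the edge of $\mathbf a$ going out of $t(e)$ gives a tree $\mathbf b$ and an edge $\mathbf a\to\mathbf b$ of weight $x_e$. $\mathcal L$ is the matrix indexed by spanning trees with $\mathcal L_{\mathbf a\mathbf b}=x_e$ for such edges, $0$ for other off-diagonal entries, and $\mathcal L_{\mathbf a\mathbf a}=-\sum_{s(e)=r}x_e+y_r$, $r$ the root of $\mathbf a$. *)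

From HB Require Import structures.
From mathcomp Require Import all_boot all_order all_algebra.
Set Implicit Arguments. Unset Strict Implicit. Unset Printing Implicit Defensive.
Import Order.TTheory GRing.Theory Num.Theory.
Local Open Scope ring_scope.

Fixpoint mpoly (n : nat) : comNzRingType :=
  match n with
  | 0 => int
  | m.+1 => {poly mpoly m}
  end.

(* The indeterminate X_i of mpoly n (meaningful for i < n). *)
Fixpoint mvar (n : nat) (i : nat) : mpoly n :=
  match n return mpoly n with
  | 0 => 0
  | m.+1 => if i == m then ('X : {poly mpoly m}) else ((mvar m i)%:P : {poly mpoly m})
  end.

Section Graph.
Variables (V : finType) (adj : rel V).

Definition edge := {p : V * V | adj p.1 p.2}.
Definition src (e : edge) : V := (val e).1.
Definition tgt (e : edge) : V := (val e).2.

Definition simple_digraph : Prop := irreflexive adj.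
Definition strongly_connected : Prop := forall v w : V, connect adj v w.

Definition var := (edge + V)%type.
Definition PolyR := mpoly #|{: var}|.
Definition X (i : var) : PolyR := mvar #|{: var}| (enum_rank i).
Definition x (e : edge) : PolyR := X (inl e).
Definition y (v : V) : PolyR := X (inr v).

(* L = Q + diag(y). *)
Definition Lentry (v w : V) : PolyR :=
  if v == w then - (\sum_(e : edge | src e == v) x e) + y v
  else match insub (v, w) : option edge with Some e => x e | None => 0 end.
Definition Lmat : 'M[PolyR]_#|V| :=
  \matrix_(i, j) Lentry (enum_val i) (enum_val j).

(* A subgraph in which every vertex has outdegree <= 1 is encoded by a
   function f : V -> option V ; f v = Some w means the edge v -> w is in it,
   f v = None means v has outdegree 0. *)
Definition is_sptree (f : {ffun V -> option V}) : bool :=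
  [&& [forall v, forall w, (f v == Some w) ==> adj v w],
      #|[pred v | f v == None]| == 1%N
      (* no cycle: no edge v -> w of the subgraph with a path w ~> v in it *)
    & [forall v, forall w, (f v == Some w) ==>
          ~~ connect (fun a b => f a == Some b) w v]].

Definition sptree := {f : {ffun V -> option V} | is_sptree f}.

(* The tree obtained from a (root r) by adding e (s(e) = r) and deleting the
   edge of a going out of t(e). *)
Definition move (a : {ffun V -> option V}) (e : edge) : {ffun V -> option V} :=
  [ffun v => if v == src e then Some (tgt e)
             else if v == tgt e then None else a v].

Definition TLentry (a b : sptree) : PolyR :=
  match [pick r | val a r == None] with
  | None => 0
  | Some r =>
      if a == b then - (\sum_(e : edge | src e == r) x e) + y r
      else match [pick e : edge | (src e == r) && (move (val a) e == val b)] with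
           | Some e => x e
           | None => 0
           end
  end.

Definition TLmat : 'M[PolyR]_#|{: sptree}| :=
  \matrix_(i, j) TLentry (enum_val i) (enum_val j).

End Graph.

From mathcomp Require Import all_boot all_algebra perm.
Set Implicit Arguments. Unset Strict Implicit. Unset Printing Implicit Defensive.
Import GRing.Theory.
Local Open Scope ring_scope.

(* Summing the row of the tree-graph matrix at a tree [a] rooted at [r] over the
   trees with a given root [v] gives [L r v]: the edges [e] out of [r] send [a]
   to pairwise distinct trees rooted at [t(e)].  Hence [TL *m F = F *m L] for the
   incidence matrix [F] of the root map.  By strong connectivity every vertex is
   the root of a (breadth-first) spanning tree, so after reordering the trees [F]
   has the shape [col_mx 1 P]; conjugating [TL] by the unitriangular
   [block_mx 1 0 P 1] then makes it block triangular with diagonal block [L]. *)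

Lemma extend_inj_bij (T : finType) n (e : 'I_n -> T) : injective e ->
  exists k, exists2 h : 'I_(n + k) -> T, bijective h & forall j, h (lshift k j) = e j.
Proof.
move=> inj_e; pose C := [set t | t \notin codom e].
pose s (u : 'I_n + 'I_#|C|) : T :=
  match u with inl j => e j | inr i => enum_val i end.
exists #|C|, (fun q => s (split q)); last by move=> j; rewrite (unsplitK (inl _ j)).
have inj_s : injective s.
  have notC j : e j \notin C by rewrite inE codom_f.
  case=> [i|i] [j|j] /= eij.
  - by rewrite (inj_e _ _ eij).
  - by have := enum_valP j; rewrite -eij (negbTE (notC i)).
  - by have := enum_valP i; rewrite eij (negbTE (notC j)).
  - by rewrite (enum_val_inj eij).
apply: inj_card_bij; first by move=> p q /inj_s /(can_inj (@splitK _ _)).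
rewrite card_ord -(cardsC C) addnC leq_add2r.
have <- : #|codom e| = n by rewrite card_codom ?card_ord.
by apply: subset_leq_card; apply/subsetP => t; rewrite !inE negbK.
Qed.

Section Determinants.
Variable R : comNzRingType.

Lemma det_intertwine_dvd m k (M : 'M[R]_(m + k)) (B : 'M[R]_m) (P : 'M[R]_(k, m)) :
  M *m col_mx 1%:M P = col_mx 1%:M P *m B -> exists q, \det M = \det B * q.
Proof.
move=> MPB.
have [Bu Bd] : ulsubmx M + ursubmx M *m P = B /\
               dlsubmx M + drsubmx M *m P = P *m B.
  move: MPB; rewrite -[M in M *m _]submxK mul_block_col mul_col_mx.
  by rewrite !mulmx1 mul1mx; apply: eq_col_mx.
exists (\det (drsubmx M - P *m ursubmx M)).
(* Conjugating by the unitriangular [1 0; P 1] makes M block upper triangular. *)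
have : M *m block_mx 1%:M 0 P 1%:M =
       block_mx 1%:M 0 P 1%:M *m block_mx B (ursubmx M) 0 (drsubmx M - P *m ursubmx M).
  rewrite -[M in M *m _]submxK !mulmx_block.
  by rewrite !mulmx1 !mulmx0 !mul1mx !mul0mx !addr0 !add0r Bu Bd addrC subrK.
move/(congr1 determinant); rewrite !det_mulmx det_lblock det_ublock !det1.
by rewrite !mul1r mulr1.
Qed.

Lemma det_reindex_bij (T : finType) N1 N2 (A : T -> T -> R)
    (h1 : 'I_N1 -> T) (h2 : 'I_N2 -> T) : bijective h1 -> bijective h2 ->
  \det (\matrix_(i, j) A (h1 i) (h1 j)) = \det (\matrix_(i, j) A (h2 i) (h2 j)).
Proof.
move=> [h1i h1K h1iK] bij_h2.
have eqN : N1 = N2.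
  by rewrite -[N1]card_ord -[N2]card_ord (bij_eq_card (Bijective h1K h1iK))
             (bij_eq_card bij_h2).
subst N2; have inj_h2 := bij_inj bij_h2.
have inj_s : injective (h1i \o h2).
  by move=> i j /= /(congr1 h1); rewrite !h1iK => /inj_h2.
set s := perm inj_s.
have -> : \matrix_(i, j) A (h2 i) (h2 j) =
          row_perm s (col_perm s (\matrix_(i, j) A (h1 i) (h1 j))).
  by apply/matrixP => i j; rewrite !mxE !permE /= !h1iK.
rewrite row_permE col_permE !det_mulmx !det_perm odd_permV.
by rewrite mulrCA -signr_addb addbb mulr1.
Qed.

(* Strong lumpability of [A] along [f]: [A *m F = F *m B] for [F] the incidence
   matrix of [f]. *)
Definition lumpable (T U : finType) (A : T -> T -> R) (f : T -> U) (B : U -> U -> R) :=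
  forall a v, \sum_(b | f b == v) A a b = B (f a) v.

Lemma det_dvd_lumpable (T U : finType) (A : T -> T -> R) (f : T -> U) (B : U -> U -> R)
    (g : U -> T) NT NU (hT : 'I_NT -> T) (hU : 'I_NU -> U) :
  bijective hT -> bijective hU -> cancel g f -> lumpable A f B ->
  exists q, \det (\matrix_(i, j) A (hT i) (hT j)) =
            \det (\matrix_(i, j) B (hU i) (hU j)) * q.
Proof.
move=> bij_hT [hUi hUK hUiK] gK lumpA.
have inj_ghU : injective (g \o hU) by move=> i j /= /(can_inj gK) /(can_inj hUK).
(* Enumerate the [g u] first: the incidence matrix of [f] then reads [col_mx 1 F]. *)
have [k [h bij_h hE]] := extend_inj_bij inj_ghU.
rewrite (det_reindex_bij A bij_hT bij_h).
pose F := \matrix_(i, j) (f (h (rshift NU i)) == hU j)%:R : 'M[R]_(k, NU).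
have FE q j : col_mx 1%:M F q j = (f (h q) == hU j)%:R.
  rewrite -[q]splitK; case: (split q) => [i|i] /=.
    by rewrite col_mxEu !mxE hE /= gK (can_eq hUK).
  by rewrite col_mxEd mxE.
apply: (det_intertwine_dvd (P := F)); apply/matrixP => p j; rewrite !mxE.
under eq_bigr => q _ do rewrite FE mxE.
under [RHS]eq_bigr => l _ do rewrite FE mxE.
transitivity (\sum_b A (h p) b * (f b == hU j)%:R).
  by rewrite (reindex h) //; apply: onW_bij.
under [LHS]eq_bigr => b _ do rewrite mulr_natr mulrb.
rewrite -big_mkcond /= lumpA (bigD1 (hUi (f (h p)))) //= hUiK eqxx mul1r.
rewrite big1 ?addr0 // => l /negbTE ne_l.
by rewrite -(can_eq hUiK) hUK eq_sym ne_l mul0r.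
Qed.

End Determinants.

Section SpanningTrees.
Variables (V : finType) (adj : rel V).

Definition succ (f : {ffun V -> option V}) : rel V := fun a b => f a == Some b.

Lemma connect_sink (f : {ffun V -> option V}) z u :
  f z = None -> connect (succ f) z u -> u = z.
Proof. by move=> fz /connectP [[|z' p] //= /andP []]; rewrite /succ fz. Qed.

Lemma sptree_root_uniq f z z' : is_sptree adj f -> f z = None -> f z' = None -> z = z'.
Proof.
case/and3P => _ /card1P [r r_root] _ fz fz'.
by move: (r_root z) (r_root z'); rewrite !inE /= fz fz' => /esym/eqP -> /esym/eqP ->.
Qed.

Section BfsTree.
Hypothesis sc : strongly_connected adj.
Variable v : V.

Definition ball_step (S : {set V}) : {set V} := S :|: [set u | [exists w in S, adj u w]].

Definition ball k := iter k ball_step [set v].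

Lemma ball_exhaustive u : exists k, u \in ball k.
Proof.
have /connectP [p] := sc u v.
elim: p u => [|z p IHp] u /= => [_ <-|/andP [adj_uz /IHp IHz] /IHz [k zk]].
  by exists 0%N; rewrite inE.
exists k.+1.
by rewrite /= !inE; apply/orP; right; apply/existsP; exists z; rewrite zk.
Qed.

Definition dist u := ex_minn (ball_exhaustive u).

Lemma dist_ball u : u \in ball (dist u).
Proof. by rewrite /dist; case: ex_minnP. Qed.

Lemma dist_min u k : u \in ball k -> (dist u <= k)%N.
Proof. by rewrite /dist; case: ex_minnP => m _ min_m /min_m. Qed.

Lemma dist_eq0 u : (dist u == 0%N) = (u == v).
Proof.
apply/idP/eqP => [/eqP du0 | ->]; first by have := dist_ball u; rewrite du0 inE => /eqP.
by rewrite -leqn0 dist_min // inE.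
Qed.

Lemma dist_descent u : u != v -> exists2 w, adj u w & (dist w < dist u)%N.
Proof.
rewrite -dist_eq0; have := dist_ball u; case du: (dist u) => [|k] //= + _.
rewrite inE => /orP [uk | /[!inE] /existsP [w /andP [wk adj_uw]]].
  by have := dist_min uk; rewrite du ltnn.
by exists w; rewrite // ltnS dist_min.
Qed.

Definition bfs_tree : {ffun V -> option V} :=
  [ffun u => if u == v then None else [pick w | adj u w && (dist w < dist u)%N]].

Lemma bfs_treeP u w : succ bfs_tree u w -> adj u w && (dist w < dist u)%N.
Proof. by rewrite /succ ffunE; case: ifP => // _; case: pickP => // z ? /eqP [<-]. Qed.

Lemma bfs_tree_root u : (bfs_tree u == None) = (u == v).
Proof.
rewrite ffunE; case: ifP => //= /negbT /dist_descent [w adj_uw dw].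
by case: pickP => // /(_ w); rewrite adj_uw dw.
Qed.

Lemma bfs_tree_is_sptree : is_sptree adj bfs_tree.
Proof.
apply/and3P; split.
- by apply/'forall_'forall_implyP => u w /bfs_treeP /andP [].
- by apply/eqP/eq_card1 => u; rewrite inE /= bfs_tree_root.
apply/'forall_'forall_implyP => u w uw; apply/negP => /connectP [p p_path u_last].
have : (dist u <= dist w)%N.
  rewrite u_last; elim: p w p_path {uw u_last} => //= z p IHp w.
  by case/andP=> /bfs_treeP /andP [_ /ltnW dz] /IHp /leq_trans; apply.
by case/andP: (bfs_treeP uw) => _ dwu; rewrite leqNgt dwu.
Qed.

End BfsTree.

Section MoveTree.
Variables (f : {ffun V -> option V}) (e : edge adj).
Hypotheses (f_tree : is_sptree adj f) (f_root : f (src e) = None).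
Hypothesis src_neq_tgt : src e != tgt e.
Local Notation g := (move f e).

Lemma move_src : g (src e) = Some (tgt e).
Proof. by rewrite ffunE eqxx. Qed.

Lemma move_tgt : g (tgt e) = None.
Proof. by rewrite ffunE eq_sym (negbTE src_neq_tgt) eqxx. Qed.

Lemma move_other z : z != src e -> z != tgt e -> g z = f z.
Proof. by move=> /negbTE zs /negbTE zt; rewrite ffunE zs zt. Qed.

(* A vertex of [g] with a successor that reaches a non-root is neither [tgt e]
   (a root of [g]) nor [src e] (whose successor is [tgt e]). *)
Lemma move_step_eq z z' u :
  succ g z z' -> connect (succ g) z' u -> g u != None -> g z = f z.
Proof.
move=> gzz' z'u gu; apply: move_other; last first.
  by apply: contraTneq gzz' => ->; rewrite /succ move_tgt.
apply: contraNneq gu => zs; move: gzz'; rewrite /succ zs move_src => /eqP [zt].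
by rewrite -zt in z'u; rewrite (connect_sink move_tgt z'u) move_tgt.
Qed.

Lemma connect_move w u : g u != None -> connect (succ g) w u -> connect (succ f) w u.
Proof.
move=> gu /connectP [p]; elim: p w => [|z p IHp] w /= => [_ -> // | /andP [wz zp] u_last].
have zu : connect (succ g) z u by apply/connectP; exists p.
apply: connect_trans (IHp z zp u_last); apply: connect1.
by rewrite /succ -(move_step_eq wz zu gu).
Qed.

Lemma move_is_sptree : is_sptree adj g.
Proof.
case/and3P: f_tree => f_sub _ f_acyc; apply/and3P; split.
- apply/'forall_'forall_implyP => u w; rewrite ffunE.
  case: ifP => [/eqP -> /eqP [<-] | _]; first exact: (valP e).
  by case: ifP => // _; apply: (implyP (forallP (forallP f_sub u) w)).
- apply/eqP/(eq_card1 (x := tgt e)) => u; rewrite !inE /=.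
  have [-> | us] := eqVneq u (src e); first by rewrite move_src (negbTE src_neq_tgt).
  have [-> | ut] := eqVneq u (tgt e); first by rewrite move_tgt !eqxx.
  rewrite move_other //; apply: contraNF us => /eqP fu.
  by rewrite (sptree_root_uniq f_tree fu f_root).
apply/'forall_'forall_implyP => u w guw; apply/negP => wu.
have gu : g u != None by rewrite (eqP guw).
have fuw : f u == Some w by rewrite -(move_step_eq guw wu gu).
by move: (implyP (forallP (forallP f_acyc u) w) fuw); rewrite (connect_move gu wu).
Qed.

End MoveTree.
End SpanningTrees.

Section TreeGraph.
Variables (V : finType) (adj : rel V).

Lemma edge_ext (e e' : edge adj) : src e = src e' -> tgt e = tgt e' -> e = e'.
Proof. by move=> se te; apply/val_inj/injective_projections. Qed.

Lemma Lentry_offdiag u w :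
  u != w -> Lentry adj u w = \sum_(e | (src e == u) && (tgt e == w)) x e.
Proof.
move=> /negbTE uw; rewrite /Lentry uw; case: insubP => [e0 _ e0E | not_adj].
  rewrite (big_pred1 e0) // => e; apply/andP/eqP => [[/eqP se /eqP te] | ->].
    by apply: edge_ext; rewrite /src /tgt e0E.
  by rewrite /src /tgt e0E.
rewrite big_pred0 // => e; apply/andP => -[/eqP se /eqP te].
by move: not_adj; rewrite -se -te (valP e).
Qed.

Lemma sptree_has_root (a : sptree adj) : exists r, val a r == None.
Proof. by case/and3P: (valP a) => _ /card1P [r /(_ r)]; rewrite !inE eqxx; exists r. Qed.

Definition root (a : sptree adj) : V := xchoose (sptree_has_root a).

Lemma rootP (a : sptree adj) : val a (root a) = None.
Proof. exact/eqP/(xchooseP (sptree_has_root a)). Qed.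

Lemma rootE (a : sptree adj) z : val a z = None -> root a = z.
Proof. exact/(sptree_root_uniq (valP a))/rootP. Qed.

Lemma pick_root (a : sptree adj) : [pick r | val a r == None] = Some (root a).
Proof. by case: pickP => [r /eqP/rootE -> // | /(_ (root a))]; rewrite rootP eqxx. Qed.

Lemma TLentry_diag (a : sptree adj) :
  TLentry a a = - (\sum_(e | src e == root a) x e) + y adj (root a).
Proof. by rewrite /TLentry pick_root eqxx. Qed.

Lemma TLentry_offdiag (a b : sptree adj) : a != b ->
  TLentry a b = \sum_(e | (src e == root a) && (move (val a) e == val b)) x e.
Proof.
rewrite /TLentry pick_root => /negbTE ->.
case: pickP => [e0 e0b | none]; last by rewrite big_pred0.
rewrite (big_pred1 e0) // => e; apply/idP/eqP => [eb | ->]; last exact: e0b.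
(* both moves send [root a] to the target of the added edge *)
have [/andP [/eqP s0 /eqP m0] /andP [/eqP s /eqP m]] := (e0b, eb).
apply: edge_ext; first by rewrite s s0.
have : move (val a) e (root a) = move (val a) e0 (root a) by rewrite m m0.
by rewrite !ffunE -{1}s -s0 !eqxx => -[].
Qed.

Hypothesis simple : simple_digraph adj.

Lemma src_neq_tgt (e : edge adj) : src e != tgt e.
Proof. by apply: contraTneq (valP e) => se; rewrite -/(src e) -/(tgt e) se simple. Qed.

Definition tmove (a : sptree adj) (e : edge adj) : sptree adj := insubd a (move (val a) e).

Section TreeMove.
Variables (a : sptree adj) (e : edge adj).
Hypothesis src_root : src e = root a.

Lemma tmoveE : val (tmove a e) = move (val a) e.
Proof.
rewrite insubdK //; apply: move_is_sptree (valP a) _ (src_neq_tgt e).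
by rewrite src_root rootP.
Qed.

Lemma root_tmove : root (tmove a e) = tgt e.
Proof. by apply: rootE; rewrite tmoveE (move_tgt _ (src_neq_tgt e)). Qed.

Lemma tmove_neq : tmove a e != a.
Proof. by apply/eqP => ta; move: (src_neq_tgt e); rewrite -root_tmove ta src_root eqxx. Qed.

End TreeMove.

Lemma TLentry_lumpable : lumpable (@TLentry V adj) root (Lentry adj).
Proof.
move=> a v.
have off : \sum_(b | (root b == v) && (b != a)) TLentry a b =
           \sum_(e | (src e == root a) && (tgt e == v)) x e.
  under eq_bigr => b /andP [_ ba] do rewrite TLentry_offdiag 1?eq_sym //.
  rewrite (exchange_big_dep (fun e => (src e == root a) && (tgt e == v))) /=; last first.
    move=> b e /andP [/eqP <- _] /andP [-> /eqP m] /=.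
    apply/eqP/esym/rootE; have := congr1 (fun f : {ffun V -> option V} => f (tgt e)) m.
    by rewrite /= (move_tgt _ (src_neq_tgt e)) => <-.
  apply: eq_bigr => e /andP [/eqP se /eqP te].
  rewrite (big_pred1 (tmove a e)) // => b /=; apply/idP/eqP => [| ->].
    by case/andP=> _ /andP [_ /eqP m]; apply: val_inj; rewrite tmoveE.
  by rewrite root_tmove // te tmove_neq // se tmoveE // !eqxx.
rewrite (bigID (pred1 a)) /= off; have [<- | rv] := eqVneq (root a) v.
  rewrite (big_pred1 a) => [|b]; last by rewrite /= andbC; case: eqP => // ->; rewrite eqxx.
  rewrite TLentry_diag [X in _ + X]big_pred0 ?addr0 => [|e]; first by rewrite /Lentry eqxx.
  by apply: contraNF (src_neq_tgt e) => /andP [/eqP -> /eqP ->].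
rewrite big_pred0 ?add0r => [|b]; first by rewrite Lentry_offdiag.
by apply: contraNF rv => /andP [/eqP <- /eqP ->].
Qed.

Hypothesis sc : strongly_connected adj.

Definition bfs_sptree (v : V) : sptree adj := Sub (bfs_tree sc v) (bfs_tree_is_sptree sc v).

Lemma root_bfs_sptree : cancel bfs_sptree root.
Proof. by move=> v; apply: rootE; apply/eqP; rewrite /= bfs_tree_root. Qed.

End TreeGraph.

Theorem lemma4p2 (V : finType) (adj : rel V) :
  simple_digraph adj -> strongly_connected adj ->
  exists q : PolyR adj, \det (TLmat adj) = \det (Lmat adj) * q.
Proof.
move=> simple sc.
apply: (det_dvd_lumpable (enum_val_bij _) (enum_val_bij _) (root_bfs_sptree sc)).
exact: TLentry_lumpable simple.
Qed.
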